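(* Let $(x_1,\dots,x_{r+1})$ be a nonbacktracking walk in an undirected graph without loops. Then for every repeating edge block, with first node at position $a$: (i) $x_a=x_j$ for some $j<a$ (equivalently, in the notation of Lemma 4, the list $\mathbf R_2$ of repeating edge blocks whose first-node vertex has not appeared earlier in the walk is empty); and (ii) either $x_a=x_1$ or $x_a=x_j$ for some position $j$ in the new edge interior.
   Context: A walk of length $r$ is a sequence $(x_1,\dots,x_{r+1})$ of vertices with each $\{x_i,x_{i+1}\}$ an edge; it is nonbacktracking if $x_i\neq x_{i+2}$ for all $i\in\{1,\dots,r-1\}$. The $i$-th edge $\{x_i,x_{i+1}\}$ is a new edge if it differs from $\{x_j,x_{j+1}\}$ for all $j<i$, and a repeating edge otherwise. A repeating edge block is a maximal run of consecutive repeating edges, say edges $a,\dots,b-1$ ($a<b$); its first node is position $a$ and its last node is position $b$. The new edge interior is the list of positions $m$ with $2\le m\le r$ such that both the $(m-1)$-th and $m$-th edges are new. *)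

From mathcomp Require Import all_boot.
Set Implicit Arguments. Unset Strict Implicit. Unset Printing Implicit Defensive.

(* A walk of length r is x 1, ..., x (r+1) (1-indexed; values of x outside
   1..r+1 are irrelevant). The graph is a relation e on an eqType T. *)

Definition undirected_loopless (T : eqType) (e : rel T) : Prop :=
  symmetric e /\ irreflexive e.

Definition is_walk (T : eqType) (e : rel T) (x : nat -> T) (r : nat) : Prop :=
  forall i, 1 <= i <= r -> e (x i) (x i.+1).

Definition nonbacktracking (T : eqType) (x : nat -> T) (r : nat) : Prop :=
  forall i, 1 <= i <= r - 1 -> x i != x i.+2.

Definition same_edge (T : eqType) (x : nat -> T) (i j : nat) : bool :=
  ((x i == x j) && (x i.+1 == x j.+1)) || ((x i == x j.+1) && (x i.+1 == x j)).

Definition new_edge (T : eqType) (x : nat -> T) (i : nat) : Prop :=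
  forall j, 1 <= j < i -> ~~ same_edge x i j.

Definition repeating_edge (T : eqType) (x : nat -> T) (i : nat) : Prop :=
  ~ new_edge x i.

(* edges a, ..., b-1 form a repeating edge block (maximal run of repeating
   edges) in a walk of length r; its first node is position a and its
   last node is position b *)
Definition repeating_edge_block (T : eqType) (x : nat -> T) (r a b : nat) : Prop :=
  [/\ 1 <= a < b, b <= r.+1,
      (forall i, a <= i < b -> repeating_edge x i),
      (a = 1 \/ new_edge x a.-1) &
      (b = r.+1 \/ new_edge x b)].

Definition in_new_edge_interior (T : eqType) (x : nat -> T) (r m : nat) : Prop :=
  [/\ 2 <= m <= r, new_edge x m.-1 & new_edge x m].

From mathcomp Require Import all_boot zify.
Set Implicit Arguments. Unset Strict Implicit.

(* The first visit p of the vertex x_a has both incident edges new: edge p-1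
   because it reaches a fresh vertex, edge p because an earlier copy of it
   would have to leave x_p from an earlier visit or, read backwards, come
   straight back to x_(p-1), which nonbacktracking forbids.  Since edge a is
   repeating, p < a, so p = 1 or p lies in the new edge interior. *)

Definition first_visit (T : eqType) (x : nat -> T) (p : nat) : Prop :=
  forall k, 1 <= k < p -> x k != x p.

Section FirstVisit.
Variables (T : eqType) (x : nat -> T).

Lemma first_visit_exists a : 0 < a ->
  exists p, [/\ 0 < p <= a, x p = x a & first_visit x p].
Proof.
move=> a_gt0.
have hasa : exists p, (0 < p) && (x p == x a) by exists a; rewrite a_gt0 eqxx.
case: (ex_minnP hasa) => p /andP [p_gt0 /eqP xpa] p_min.
have p_le_a : p <= a by apply: p_min; rewrite a_gt0 eqxx.
exists p; split => //; first by rewrite p_gt0.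
move=> k /andP [k_gt0 k_lt_p]; apply/eqP => xkp.
by have := p_min k; rewrite k_gt0 xkp xpa eqxx => /(_ isT); rewrite leqNgt k_lt_p.
Qed.

Lemma first_visit_new_edge_pred p : first_visit x p -> new_edge x p.-1.
Proof.
case: p => [|p] fresh q /andP [q_gt0 q_lt] //=.
rewrite /same_edge negb_or !negb_and.
by apply/andP; split; apply/orP; right; rewrite eq_sym fresh //; lia.
Qed.

Lemma first_visit_new_edge r p : nonbacktracking x r -> 1 <= p <= r ->
  first_visit x p -> new_edge x p.
Proof.
move=> nbt p_range fresh q /andP [q_gt0 q_lt_p].
rewrite /same_edge negb_or !negb_and.
apply/andP; split; apply/orP.
- by left; rewrite eq_sym fresh ?q_gt0.
have [q1_lt_p|q1_eq_p] : q.+1 < p \/ q.+1 = p by lia.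
  by left; rewrite eq_sym fresh //; lia.
by right; rewrite -q1_eq_p eq_sym nbt //; lia.
Qed.

End FirstVisit.

Theorem lemma5 (T : eqType) (e : rel T) (x : nat -> T) (r : nat) :
  undirected_loopless e -> is_walk e x r -> nonbacktracking x r ->
  forall a b, repeating_edge_block x r a b ->
    (exists2 j, 1 <= j < a & x a = x j) /\
    (x a = x 1 \/ exists2 j, in_new_edge_interior x r j & x a = x j).
Proof.
move=> _ _ nbt a b [ab_range b_le rep _ _].
have [p [p_range xpa fresh]] := @first_visit_exists _ x a ltac:(lia).
have p_lt_a : p < a.
  rewrite ltn_neqAle (proj2 (andP p_range)) andbT; apply/eqP => p_eq_a.
  apply: (rep a); first lia.
  by rewrite -p_eq_a; apply: (first_visit_new_edge nbt) => //; lia.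
split; first by exists p => //; lia.
have [p_eq1|p_ne1] := eqVneq p 1; first by left; rewrite -xpa p_eq1.
right; exists p => //; split; first lia.
- exact: first_visit_new_edge_pred.
- by apply: (first_visit_new_edge nbt) => //; lia.
Qed.
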